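(* For $|q|<1$ and every nonzero complex number $a$, \[ \sum_{i,j,k\geq 0} \frac{q^{i^2+j^2+k^2+i(j+k)}}{(q;q)_i(q;q)_j(q;q)_k} a^{j-k}=\frac{(-aq,-q/a,q^2;q^2)_\infty}{(q;q)_\infty}. \]
   Context: For $|q|<1$: $(a;q)_n=\prod_{k=0}^{n-1}(1-aq^k)$ ($(a;q)_0=1$), $(a;q)_\infty=\prod_{k\ge0}(1-aq^k)$, $(a_1,\dots,a_m;q)_\infty=\prod_\ell(a_\ell;q)_\infty$. *)

From Stdlib Require Import Reals.
From Coquelicot Require Import Coquelicot.
Open Scope C_scope.

Fixpoint qpoch (a q : C) (n : nat) : C :=
  match n with
  | O => 1
  | S m => qpoch a q m * (1 - a * q ^ m)
  end.

Definition is_qpoch_inf (a q P : C) : Prop :=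
  filterlim (fun n => qpoch a q n) eventually (locally P).

Fixpoint csum (f : nat -> C) (N : nat) : C :=
  match N with
  | O => f O
  | S M => csum f M + f (S M)
  end.

Definition cor48_term (q a : C) (i j k : nat) : C :=
  q ^ (i*i + j*j + k*k + i*(j+k))
  / (qpoch q q i * qpoch q q j * qpoch q q k)
  * (a ^ j / a ^ k).

Definition cor48_partial (q a : C) (N : nat) : C :=
  csum (fun i => csum (fun j => csum (fun k => cor48_term q a i j k) N) N) N.

(* Weight the (i, j, k) term of the partial sum by the factors
   (q^(N-i-j+1); q)_(i+j) (q^(N-i-k+1); q)_(i+k), which tend to 1 as N grows.  In the
   weighted sum W_N put J = i + j and K = i + k: the sum over i is a terminating
   q-series equal to 1, and the remaining double sum of q^(J^2+K^2-JK) a^(J-K) [N;J] [N;K]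
   collapses along each diagonal J - K = n by q-Vandermonde, giving
     W_N = sum_(|n| <= N) q^(n^2) a^n [2N; N+n]_q.
   Rothe's q-binomial theorem gives the finite Jacobi triple product
     (-aq; q^2)_N (-q/a; q^2)_N = sum_(|n| <= N) q^(n^2) a^n [2N; N+n]_(q^2).
   Since [2N; N+n]_p -> 1/(p; p)_oo and the coefficients q^(n^2) a^n decay like |q|^|n|,
   Tannery's theorem passes to the limit in both sums, and likewise shows that the
   partial sums and W_N have the same limit. *)

From Stdlib Require Import Reals Lia Lra.
From Coquelicot Require Import Coquelicot.
Open Scope C_scope.

Fixpoint Csum (f : nat -> C) (n : nat) : C :=
  match n with O => 0 | S m => Csum f m + f m end.

Fixpoint Cprod (f : nat -> C) (n : nat) : C :=
  match n with O => 1 | S m => Cprod f m * f m end.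

Lemma csum_Csum (f : nat -> C) N : csum f N = Csum f (S N).
Proof. induction N; simpl; [ring | rewrite IHN; reflexivity]. Qed.

Lemma Csum_ext (f g : nat -> C) n :
  (forall k, (k < n)%nat -> f k = g k) -> Csum f n = Csum g n.
Proof.
  induction n; intros H; simpl; auto.
  rewrite IHn, (H n) by (lia || (intros; apply H; lia)). reflexivity.
Qed.

Lemma Csum_plus (f g : nat -> C) n : Csum (fun k => f k + g k) n = Csum f n + Csum g n.
Proof. induction n; simpl; [ring | rewrite IHn; ring]. Qed.

Lemma Csum_minus (f g : nat -> C) n : Csum (fun k => f k - g k) n = Csum f n - Csum g n.
Proof. induction n; simpl; [ring | rewrite IHn; ring]. Qed.

Lemma Csum_scal (c : C) (f : nat -> C) n : Csum (fun k => c * f k) n = c * Csum f n.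
Proof. induction n; simpl; [ring | rewrite IHn; ring]. Qed.

Lemma Csum_eq_0 (f : nat -> C) n : (forall k, (k < n)%nat -> f k = 0) -> Csum f n = 0.
Proof.
  induction n; intros H; simpl; [reflexivity |].
  rewrite IHn, H by (lia || (intros; apply H; lia)). ring.
Qed.

Lemma Csum_add (f : nat -> C) m n :
  Csum f (m + n) = Csum f m + Csum (fun k => f (m + k)%nat) n.
Proof.
  induction n; simpl; [rewrite Nat.add_0_r; ring |].
  rewrite Nat.add_succ_r; simpl. rewrite IHn. ring.
Qed.

Lemma Csum_Sl (f : nat -> C) n : Csum f (S n) = f O + Csum (fun k => f (S k)) n.
Proof. change (S n) with (1 + n)%nat. rewrite Csum_add. simpl. ring. Qed.

Lemma Csum_last_0 (f : nat -> C) n : f n = 0 -> Csum f (S n) = Csum f n.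
Proof. intros H; simpl; rewrite H; ring. Qed.

Lemma Csum_rev (f : nat -> C) n : Csum f n = Csum (fun k => f (n - 1 - k)%nat) n.
Proof.
  revert f; induction n; intros f; [reflexivity |].
  rewrite (Csum_Sl (fun k => f (S n - 1 - k)%nat)).
  change (Csum f (S n)) with (Csum f n + f n).
  rewrite (IHn f), Cplus_comm.
  replace (S n - 1 - 0)%nat with n by lia. f_equal.
  apply Csum_ext; intros k Hk. f_equal. lia.
Qed.

Lemma Csum_lincomb (c x y : nat -> C) (P P' : C) m :
  Csum (fun n => c n * (P * x n - P' * y n)) m
  = P * Csum (fun n => c n * x n) m - P' * Csum (fun n => c n * y n) m.
Proof. induction m as [|m IH]; simpl; [ring | rewrite IH; ring]. Qed.

Lemma Csum_swap (u : nat -> nat -> C) m n :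
  Csum (fun i => Csum (u i) n) m = Csum (fun j => Csum (fun i => u i j) m) n.
Proof.
  induction m; simpl; [symmetry; apply Csum_eq_0; auto |].
  rewrite IHm, <- Csum_plus. reflexivity.
Qed.

Lemma Csum_shift (F : nat -> C) K M :
  (forall x, (x < K)%nat -> F x = 0) -> (forall x, (M <= x)%nat -> F x = 0) ->
  Csum (fun n => F (K + n)%nat) M = Csum F M.
Proof.
  intros Hlo Hhi. destruct (Nat.le_gt_cases K M).
  - replace M with (K + (M - K))%nat at 2 by lia.
    rewrite Csum_add, (Csum_eq_0 F K) by auto.
    replace M with (M - K + K)%nat at 1 by lia.
    rewrite Csum_add, (Csum_eq_0 _ K) by (intros; apply Hhi; lia). ring.
  - rewrite !Csum_eq_0; auto; intros; [apply Hlo | apply Hhi]; lia.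
Qed.

Lemma Cmod_Csum_geom (f : nat -> C) (D r : R) n : (0 <= r < 1)%R ->
  (forall k, Cmod (f k) <= D * r ^ k)%R -> (Cmod (Csum f n) <= D / (1 - r))%R.
Proof.
  intros Hr Hf.
  assert (HD : (0 <= D)%R) by (specialize (Hf O); pose proof (Cmod_ge_0 (f O)); simpl in Hf; lra).
  assert (Hinv : (Cmod (Csum f n) * (1 - r) <= D * (1 - r ^ n))%R).
  { induction n; simpl Csum; [rewrite Cmod_0; simpl; lra |].
    pose proof (Cmod_triangle (Csum f n) (f n)). specialize (Hf n). simpl. nra. }
  apply Rmult_le_reg_r with (1 - r)%R; [lra |]. unfold Rdiv.
  rewrite Rmult_assoc, Rinv_l by lra. pose proof (pow_le r n). nra.
Qed.

Lemma Csum_diag_split (G : nat -> nat -> C) M :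
  (forall J K, (M <= J)%nat -> G J K = 0) -> (forall J K, (M <= K)%nat -> G J K = 0) ->
  Csum (fun J => Csum (fun K => G J K) M) M
  = Csum (fun n => Csum (fun K => G (K + n)%nat K) M) M
    + Csum (fun n => Csum (fun J => G J (J + S n)%nat) M) M.
Proof.
  intros HJ HK.
  assert (Hlow : forall K, Csum (fun n => G (K + n)%nat K) M
                          = Csum (fun J => if Nat.leb K J then G J K else 0) M).
  { intros K. rewrite <- (Csum_shift (fun J => if Nat.leb K J then G J K else 0) K M).
    - apply Csum_ext. intros n _. rewrite (proj2 (Nat.leb_le K (K + n))) by lia. reflexivity.
    - intros x Hx. rewrite (proj2 (Nat.leb_gt K x)) by lia. reflexivity.
    - intros x Hx. destruct (Nat.leb K x); auto. }
  assert (Hup : forall J, Csum (fun n => G J (J + S n)%nat) M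
                         = Csum (fun K => if Nat.leb (S J) K then G J K else 0) M).
  { intros J. rewrite <- (Csum_shift (fun K => if Nat.leb (S J) K then G J K else 0) (S J) M).
    - apply Csum_ext. intros n _. rewrite (proj2 (Nat.leb_le (S J) (S J + n))) by lia.
      f_equal. lia.
    - intros x Hx. rewrite (proj2 (Nat.leb_gt (S J) x)) by lia. reflexivity.
    - intros x Hx. destruct (Nat.leb (S J) x); auto. }
  rewrite (Csum_swap (fun n K => G (K + n)%nat K)), (Csum_swap (fun n J => G J (J + S n)%nat)).
  rewrite (Csum_ext _ _ _ (fun K _ => Hlow K)), (Csum_ext _ _ _ (fun J _ => Hup J)).
  rewrite (Csum_swap (fun K J => if Nat.leb K J then G J K else 0)), <- Csum_plus.
  apply Csum_ext. intros J _. rewrite <- Csum_plus. apply Csum_ext. intros K _.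
  destruct (Nat.leb_spec K J), (Nat.leb_spec (S J) K); try lia; ring.
Qed.

Lemma Cprod_ext (f g : nat -> C) n :
  (forall k, (k < n)%nat -> f k = g k) -> Cprod f n = Cprod g n.
Proof.
  induction n; intros H; simpl; auto.
  rewrite IHn, (H n) by (lia || (intros; apply H; lia)). reflexivity.
Qed.

Lemma Cprod_mult (f g : nat -> C) n : Cprod (fun k => f k * g k) n = Cprod f n * Cprod g n.
Proof. induction n; simpl; [ring | rewrite IHn; ring]. Qed.

Lemma Cprod_const (c : C) n : Cprod (fun _ => c) n = c ^ n.
Proof. induction n; simpl; [reflexivity | rewrite IHn; ring]. Qed.

Lemma Cprod_add (f : nat -> C) m n :
  Cprod f (m + n) = Cprod f m * Cprod (fun k => f (m + k)%nat) n.
Proof.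
  induction n; simpl; [rewrite Nat.add_0_r; ring |].
  rewrite Nat.add_succ_r; simpl. rewrite IHn. ring.
Qed.

Lemma Cprod_rev (f : nat -> C) n : Cprod f n = Cprod (fun k => f (n - 1 - k)%nat) n.
Proof.
  revert f; induction n; intros f; [reflexivity |].
  assert (Hl : forall g, Cprod g (S n) = g O * Cprod (fun k => g (S k)) n).
  { intros g. change (S n) with (1 + n)%nat. rewrite Cprod_add. simpl. ring. }
  rewrite (Hl (fun k => f (S n - 1 - k)%nat)).
  change (Cprod f (S n)) with (Cprod f n * f n).
  rewrite (IHn f), Cmult_comm. replace (S n - 1 - 0)%nat with n by lia. f_equal.
  apply Cprod_ext; intros k Hk. f_equal. lia.
Qed.

Lemma qpoch_Cprod x p n : qpoch x p n = Cprod (fun k => 1 - x * p ^ k) n.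
Proof. induction n; simpl; [reflexivity | rewrite IHn; reflexivity]. Qed.

(** * Gaussian binomial coefficients *)

Fixpoint qbinom (p : C) (m j : nat) : C :=
  match m, j with
  | _, O => 1
  | O, S _ => 0
  | S m', S j' => qbinom p m' (S j') + p ^ (m' - j') * qbinom p m' j'
  end.

(* [(p^(K-i+1); p)_i] for [i <= K]; for [i > K] the truncated subtraction reaches the
   factor [1 - p^0 = 0]. *)
Fixpoint qfalling (p : C) (i K : nat) : C :=
  match i with
  | O => 1
  | S i' => (1 - p ^ K) * qfalling p i' (K - 1)
  end.

Lemma qpoch_S p n : qpoch p p (S n) = qpoch p p n * (1 - p ^ S n).
Proof. reflexivity. Qed.

Lemma qbinom_0_r p m : qbinom p m 0 = 1.
Proof. destruct m; reflexivity. Qed.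

Lemma qbinom_SS p m j : qbinom p (S m) (S j) = qbinom p m (S j) + p ^ (m - j) * qbinom p m j.
Proof. reflexivity. Qed.

Lemma qbinom_gt p m j : (m < j)%nat -> qbinom p m j = 0.
Proof.
  revert j; induction m; intros [|j] H; try lia; [reflexivity |].
  rewrite qbinom_SS, !IHm by lia. ring.
Qed.

Lemma qbinom_diag p m : qbinom p m m = 1.
Proof.
  induction m; [reflexivity |].
  rewrite qbinom_SS, qbinom_gt, IHm, Nat.sub_diag by lia. simpl. ring.
Qed.

Lemma qbinom_qpoch p m j : (j <= m)%nat ->
  qbinom p m j * qpoch p p j * qpoch p p (m - j) = qpoch p p m.
Proof.
  revert j; induction m; intros [|j] H; try lia.
  - simpl. ring.
  - rewrite qbinom_0_r. simpl. ring.
  - destruct (Nat.eq_dec j m) as [->|Hjm].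
    + rewrite qbinom_diag, Nat.sub_diag. simpl. ring.
    + pose proof (IHm (S j) ltac:(lia)) as HA. pose proof (IHm j ltac:(lia)) as HB.
      replace (m - j)%nat with (S (m - S j)) in HB by lia.
      replace (S m - S j)%nat with (S (m - S j)) by lia.
      rewrite qpoch_S in HA, HB. rewrite !qpoch_S.
      replace (S (m - S j)) with (m - j)%nat in * by lia.
      replace (p ^ S m) with (p ^ (m - j) * p ^ S j) by (rewrite <- Cpow_add_r; f_equal; lia).
      rewrite qbinom_SS.
      transitivity (qbinom p m (S j) * (qpoch p p j * (1 - p ^ S j)) * qpoch p p (m - S j)
          * (1 - p ^ (m - j)) + p ^ (m - j) * (1 - p ^ S j)
          * (qbinom p m j * qpoch p p j * (qpoch p p (m - S j) * (1 - p ^ (m - j))))).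
      * ring.
      * rewrite HA, HB. ring.
Qed.

Lemma qpoch_neq_0 p n : (Cmod p < 1)%R -> qpoch p p n <> 0.
Proof.
  intros Hp. induction n as [|n IH]; simpl; [apply C1_nz |].
  apply Cmult_neq_0; auto. intros E.
  assert (Hpow : p ^ S n = 1).
  { simpl. replace (p * p ^ n) with (1 - (1 - p * p ^ n)) by ring. rewrite E. ring. }
  apply (f_equal Cmod) in Hpow. rewrite Cmod_pow, Cmod_1 in Hpow.
  pose proof (pow_lt_1_compat (Cmod p) (S n) (conj (Cmod_ge_0 p) Hp) ltac:(lia)). lra.
Qed.

Lemma qbinom_formula p m j : (Cmod p < 1)%R -> (j <= m)%nat ->
  qbinom p m j = qpoch p p m / (qpoch p p j * qpoch p p (m - j)).
Proof.
  intros Hp H. rewrite <- (qbinom_qpoch p m j H).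
  field. split; apply qpoch_neq_0; auto.
Qed.

Lemma qbinom_sym p m j : (Cmod p < 1)%R -> (j <= m)%nat -> qbinom p m j = qbinom p m (m - j).
Proof.
  intros Hp H. rewrite !qbinom_formula by (auto; lia).
  replace (m - (m - j))%nat with j by lia. field. split; apply qpoch_neq_0; auto.
Qed.

Lemma qbinom_pascal p m j : (Cmod p < 1)%R ->
  qbinom p (S m) (S j) = qbinom p m j + p ^ S j * qbinom p m (S j).
Proof.
  intros Hp. destruct (Nat.lt_total j m) as [Hlt|[->|Hgt]].
  - rewrite !qbinom_formula by (auto; lia).
    replace (S m - S j)%nat with (m - j)%nat by lia.
    replace (m - j)%nat with (S (m - S j)) by lia. rewrite !qpoch_S.
    replace (S (m - S j)) with (m - j)%nat by lia.
    replace (p ^ S m) with (p ^ (m - j) * p ^ S j) by (rewrite <- Cpow_add_r; f_equal; lia).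
    assert (Hj : 1 - p ^ S j <> 0).
    { intros E. apply (qpoch_neq_0 p (S j) Hp). rewrite qpoch_S, E. ring. }
    assert (Hmj : 1 - p ^ (m - j) <> 0).
    { intros E. apply (qpoch_neq_0 p (m - j) Hp).
      replace (m - j)%nat with (S (m - S j)) by lia. rewrite qpoch_S.
      replace (S (m - S j)) with (m - j)%nat by lia. rewrite E. ring. }
    field. repeat split; auto using qpoch_neq_0.
  - rewrite !qbinom_diag, qbinom_gt by lia. ring.
  - rewrite !qbinom_gt by lia. ring.
Qed.

Lemma qfalling_gt p i K : (K < i)%nat -> qfalling p i K = 0.
Proof.
  revert K; induction i; intros K H; [lia |]. simpl qfalling.
  destruct K as [|K].
  - simpl. ring.
  - rewrite IHi by lia. ring.
Qed.

Lemma qfalling_qpoch p i K : (i <= K)%nat -> qfalling p i K * qpoch p p (K - i) = qpoch p p K.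
Proof.
  revert K; induction i; intros K H; simpl qfalling.
  - rewrite Nat.sub_0_r. ring.
  - destruct K as [|K]; [lia |].
    replace (S K - 1)%nat with K by lia. replace (S K - S i)%nat with (K - i)%nat by lia.
    rewrite qpoch_S, <- (IHi K) by lia. simpl. ring.
Qed.

Lemma qbinom_qfalling p N J : (Cmod p < 1)%R -> qbinom p N J * qpoch p p J = qfalling p J N.
Proof.
  intros Hp. destruct (Nat.le_gt_cases J N).
  - rewrite qbinom_formula, <- (qfalling_qpoch p J N) by auto.
    field. split; apply qpoch_neq_0; auto.
  - rewrite qbinom_gt, qfalling_gt by lia. ring.
Qed.

Lemma sum_qbinom_qfalling q J K : (Cmod q < 1)%R ->
  Csum (fun i => qbinom q J i * qfalling q i K * q ^ ((J - i) * (K - i))) (S J) = 1.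
Proof.
  intros Hq. revert K. induction J as [|J IH]; intros K; [simpl; ring |].
  set (T := fun J K i => qbinom q J i * qfalling q i K * q ^ ((J - i) * (K - i))).
  change (Csum (T (S J) K) (S (S J)) = 1).
  assert (IHT : forall K, Csum (T J K) (S J) = 1) by exact IH.
  assert (Hstep : forall i, (i < S J)%nat ->
    T (S J) K (S i) = (1 - q ^ K) * T J (K - 1)%nat i + q ^ K * T J K (S i)).
  { intros i Hi. unfold T. rewrite qbinom_pascal by auto. simpl qfalling.
    replace (S J - S i)%nat with (J - i)%nat by lia.
    replace (K - S i)%nat with (K - 1 - i)%nat by lia.
    destruct (Nat.le_gt_cases (S i) J) as [HJ|HJ];
      [destruct (Nat.le_gt_cases (S i) K) as [HK|HK] |].
    - replace ((J - i) * (K - 1 - i))%nat with (K - 1 - i + (J - S i) * (K - 1 - i))%nat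
        by nia.
      replace (q ^ K) with (q ^ S i * q ^ (K - 1 - i)) by (rewrite <- Cpow_add_r; f_equal; lia).
      rewrite Cpow_add_r. ring.
    - destruct K as [|K]; [simpl; ring |].
      rewrite (qfalling_gt q i (S K - 1)) by lia. ring.
    - rewrite (qbinom_gt q J (S i)) by lia. ring. }
  rewrite Csum_Sl, (Csum_ext _ _ _ Hstep), Csum_plus, !Csum_scal, IHT.
  rewrite (Csum_last_0 (fun i => T J K (S i))) by (unfold T; rewrite qbinom_gt by lia; ring).
  pose proof (IHT K) as HK. rewrite Csum_Sl in HK.
  replace (T (S J) K O) with (q ^ K * T J K O).
  - transitivity (q ^ K * (T J K O + Csum (fun i => T J K (S i)) J) + (1 - q ^ K)).
    + ring.
    + rewrite HK. ring.
  - unfold T. rewrite !qbinom_0_r, !Nat.sub_0_r. simpl qfalling.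
    replace (S J * K)%nat with (K + J * K)%nat by lia. rewrite Cpow_add_r. ring.
Qed.

Lemma qvandermonde q m k d :
  Csum (fun j => qbinom q m j * qbinom q (k + d) (k - j) * q ^ (j * (d + j))) (S k)
  = qbinom q (m + k + d) k.
Proof.
  revert k d. induction m as [|m IH]; intros k d.
  - rewrite Csum_Sl, Csum_eq_0 by (intros; simpl; ring).
    rewrite qbinom_0_r, Nat.sub_0_r. simpl. ring.
  - destruct k as [|k]; [simpl; rewrite !qbinom_0_r; ring |].
    rewrite Csum_Sl, qbinom_0_r.
    rewrite (Csum_ext _ (fun j => qbinom q m (S j) * qbinom q (S k + d) (S k - S j)
        * q ^ (S j * (d + S j))
      + q ^ (m + d + 1) * (qbinom q m j * qbinom q (k + S d) (k - j) * q ^ (j * (S d + j))))).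
    2: { intros j Hj. rewrite qbinom_SS.
         destruct (Nat.le_gt_cases j m); [| rewrite (qbinom_gt q m j) by lia; ring].
         replace (S k + d)%nat with (k + S d)%nat by lia.
         replace (S k - S j)%nat with (k - j)%nat by lia.
         assert (E : q ^ (m - j) * q ^ (S j * (d + S j))
                     = q ^ (m + d + 1) * q ^ (j * (S d + j)))
           by (rewrite <- !Cpow_add_r; f_equal; nia).
         transitivity (qbinom q m (S j) * qbinom q (k + S d) (k - j) * q ^ (S j * (d + S j))
           + q ^ (m - j) * q ^ (S j * (d + S j)) * (qbinom q m j * qbinom q (k + S d) (k - j)));
           [ring | rewrite E; ring]. }
    rewrite Csum_plus, Csum_scal, (IH k (S d)).
    pose proof (IH (S k) d) as H1. rewrite Csum_Sl, qbinom_0_r in H1.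
    replace (S m + S k + d)%nat with (S (m + S k + d)) by lia. rewrite qbinom_SS.
    replace (m + S k + d - k)%nat with (m + d + 1)%nat by lia.
    replace (m + k + S d)%nat with (m + S k + d)%nat by lia.
    rewrite <- H1. ring.
Qed.

Lemma qvandermonde_central q N m : (Cmod q < 1)%R -> (m <= N)%nat ->
  Csum (fun K => q ^ (K * (K + m)) * qbinom q N K * qbinom q N (K + m)) (S N)
  = qbinom q (2 * N) (N + m).
Proof.
  intros Hq Hm. pose proof (qvandermonde q N (N - m) m) as V.
  replace (N - m + m)%nat with N in V by lia.
  replace (N + (N - m) + m)%nat with (2 * N)%nat in V by lia.
  rewrite qbinom_sym in V by (auto; lia).
  replace (2 * N - (N - m))%nat with (N + m)%nat in V by lia.
  replace (S N) with (S (N - m) + m)%nat by lia.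
  rewrite Csum_add, (Csum_eq_0 _ m), Cplus_0_r.
  - rewrite <- V.
    apply Csum_ext. intros K HK.
    rewrite (qbinom_sym q N (K + m)) by (auto; lia).
    replace (N - (K + m))%nat with (N - m - K)%nat by lia.
    replace (K * (K + m))%nat with (K * (m + K))%nat by lia. ring.
  - intros k Hk. rewrite (qbinom_gt q N (S (N - m) + k + m)) by lia. ring.
Qed.

Fixpoint triangular (k : nat) : nat := match k with O => O | S k' => (triangular k' + k')%nat end.

Lemma qbinomial_theorem p y z m :
  Cprod (fun i => y + z * p ^ i) m
  = Csum (fun k => qbinom p m k * p ^ triangular k * z ^ k * y ^ (m - k)) (S m).
Proof.
  induction m as [|m IH]; [simpl; ring |].
  set (T := fun m k => qbinom p m k * p ^ triangular k * z ^ k * y ^ (m - k)).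
  change (Cprod (fun i => y + z * p ^ i) m * (y + z * p ^ m) = Csum (T (S m)) (S (S m))).
  assert (IHT : Cprod (fun i => y + z * p ^ i) m = Csum (T m) (S m)) by exact IH.
  assert (Hstep : forall k, (k < S m)%nat ->
    T (S m) (S k) = y * T m (S k) + z * p ^ m * T m k).
  { intros k Hk. unfold T. rewrite qbinom_SS. simpl triangular.
    destruct (Nat.le_gt_cases (S k) m) as [Hkm|Hkm].
    - replace (S m - S k)%nat with (S (m - S k)) by lia.
      replace (m - k)%nat with (S (m - S k)) by lia.
      replace (p ^ m) with (p ^ (S (m - S k)) * p ^ k) by (rewrite <- Cpow_add_r; f_equal; lia).
      rewrite !Cpow_add_r. simpl. ring.
    - replace k with m by lia. rewrite qbinom_gt, !Nat.sub_diag by lia.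
      rewrite Cpow_add_r. simpl. ring. }
  rewrite Csum_Sl, (Csum_ext _ _ _ Hstep), Csum_plus, !Csum_scal, IHT.
  rewrite (Csum_last_0 (fun k => T m (S k))) by (unfold T; rewrite qbinom_gt by lia; ring).
  rewrite (Csum_Sl (T m)).
  replace (T (S m) O) with (y * T m O)
    by (unfold T; rewrite !qbinom_0_r, !Nat.sub_0_r; simpl; ring).
  ring.
Qed.

(** * A finite Jacobi triple product *)

(* [sum_{-N <= n <= N} q^(n^2) a^n [2N; N+n]_p], the terms with [n < 0] being
   rewritten with [[2N; N-n] = [2N; N+n]]. *)
Definition jtp_sum (p q a : C) (N : nat) : C :=
  Csum (fun n => q ^ (n * n) * a ^ n * qbinom p (2 * N) (N + n)) (S N)
  + Csum (fun n => q ^ (S n * S n) / a ^ S n * qbinom p (2 * N) (N + S n)) N.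

Lemma Cmod_sqr_lt_1 (q : C) : (Cmod q < 1)%R -> (Cmod (q ^ 2) < 1)%R.
Proof. intros Hq. rewrite Cmod_pow. pose proof (Cmod_ge_0 q). simpl. nra. Qed.

Lemma Cprod_odd_pow (q : C) (N : nat) : Cprod (fun i => q ^ (2 * i + 1)) N = q ^ (N * N).
Proof.
  induction N as [|N IH]; [reflexivity |].
  change (Cprod (fun i => q ^ (2 * i + 1)) N * q ^ (2 * N + 1) = q ^ (S N * S N)).
  rewrite IH, <- Cpow_add_r. f_equal. lia.
Qed.

Lemma jtp_rothe_prod (q a : C) (N : nat) : a <> 0 ->
  Cprod (fun i => q ^ (2 * N) + a * q * (q ^ 2) ^ i) (2 * N)
  = q ^ (3 * N * N) * a ^ N * (qpoch (- a * q) (q ^ 2) N * qpoch (- q / a) (q ^ 2) N).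
Proof.
  intros Ha. set (f := fun i => q ^ (2 * N) + a * q * (q ^ 2) ^ i).
  replace (2 * N)%nat with (N + N)%nat by lia. rewrite Cprod_add. unfold f.
  rewrite (Cprod_ext _ (fun i => q ^ (2 * i + 1) * (a + q ^ (2 * (N - 1 - i) + 1)))).
  2: { intros i Hi. rewrite <- Cpow_mult_r.
       replace (2 * N)%nat with (2 * i + 1 + (2 * (N - 1 - i) + 1))%nat by lia.
       rewrite Cpow_add_r. replace (2 * i + 1)%nat with (S (2 * i)) by lia. simpl. ring. }
  rewrite Cprod_mult, Cprod_odd_pow, Cprod_rev.
  rewrite (Cprod_ext _ (fun i => a * (1 - - q / a * (q ^ 2) ^ i))).
  2: { intros i Hi. rewrite <- Cpow_mult_r.
       replace (2 * (N - 1 - (N - 1 - i)) + 1)%nat with (S (2 * i)) by lia.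
       simpl. field. auto. }
  rewrite (Cprod_ext (fun k => q ^ (2 * N) + a * q * (q ^ 2) ^ (N + k))
                     (fun i => q ^ (2 * N) * (1 - - a * q * (q ^ 2) ^ i))).
  2: { intros i Hi. rewrite <- !Cpow_mult_r.
       replace (2 * (N + i))%nat with (2 * N + 2 * i)%nat by lia. rewrite Cpow_add_r. ring. }
  rewrite !Cprod_mult, !Cprod_const, <- !qpoch_Cprod, <- Cpow_mult_r.
  replace (3 * N * N)%nat with (N * N + 2 * N * N)%nat by lia. rewrite Cpow_add_r. ring.
Qed.

Lemma triangular_double k : (2 * triangular k + k = k * k)%nat.
Proof. induction k; simpl triangular; nia. Qed.

Lemma jtp_rothe_sum (q a : C) (N : nat) : (Cmod q < 1)%R -> a <> 0 ->
  Csum (fun k => qbinom (q ^ 2) (2 * N) k * (q ^ 2) ^ triangular k * (a * q) ^ k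
                 * (q ^ (2 * N)) ^ (2 * N - k)) (S (2 * N))
  = q ^ (3 * N * N) * a ^ N * jtp_sum (q ^ 2) q a N.
Proof.
  intros Hq Ha. pose proof (Cmod_sqr_lt_1 q Hq) as Hq2.
  rewrite (Csum_ext _ (fun k => qbinom (q ^ 2) (2 * N) k * a ^ k
                                * q ^ (k * k + 2 * N * (2 * N - k)))).
  2: { intros k _. rewrite <- !Cpow_mult_r, Cpow_mult_l, <- (triangular_double k).
       rewrite !Cpow_add_r. ring. }
  replace (S (2 * N)) with (N + S N)%nat by lia. rewrite Csum_add, Csum_rev.
  unfold jtp_sum. rewrite Cplus_comm, Cmult_plus_distr_l, <- !Csum_scal. f_equal.
  - apply Csum_ext. intros n Hn.
    replace ((N + n) * (N + n) + 2 * N * (2 * N - (N + n)))%nat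
      with (3 * N * N + n * n)%nat by nia.
    rewrite !Cpow_add_r. ring.
  - apply Csum_ext. intros n Hn.
    replace ((N - 1 - n) * (N - 1 - n) + 2 * N * (2 * N - (N - 1 - n)))%nat
      with (3 * N * N + S n * S n)%nat by nia.
    rewrite qbinom_sym by (auto; lia).
    replace (2 * N - (N - 1 - n))%nat with (N + S n)%nat by lia.
    replace (a ^ N) with (a ^ (N - 1 - n) * a ^ S n) by (rewrite <- Cpow_add_r; f_equal; lia).
    rewrite Cpow_add_r. field. apply Cpow_nz; auto.
Qed.

Lemma qpoch_0_l (p : C) (n : nat) : qpoch 0 p n = 1.
Proof. induction n as [|n IH]; simpl; [reflexivity | rewrite IH; ring]. Qed.

Lemma jtp_finite (q a : C) (N : nat) : (Cmod q < 1)%R -> a <> 0 ->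
  qpoch (- a * q) (q ^ 2) N * qpoch (- q / a) (q ^ 2) N = jtp_sum (q ^ 2) q a N.
Proof.
  intros Hq Ha. destruct (Ceq_dec q 0) as [->|Hq0].
  - replace (- a * 0) with (RtoC 0) by ring. replace (- 0 / a) with (RtoC 0) by (field; auto).
    replace (RtoC 0 ^ 2) with (RtoC 0) by ring.
    assert (Hb : qbinom 0 (2 * N) N = 1).
    { rewrite qbinom_formula, !qpoch_0_l by (rewrite ?Cmod_0; lra || lia). field. }
    unfold jtp_sum. rewrite Csum_Sl, Nat.add_0_r, Hb, !qpoch_0_l.
    rewrite !Csum_eq_0 by (intros; simpl; unfold Cdiv; ring). simpl. ring.
  - pose proof (qbinomial_theorem (q ^ 2) (q ^ (2 * N)) (a * q) (2 * N)) as E.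
    rewrite jtp_rothe_prod, jtp_rothe_sum in E by auto.
    match type of E with ?c * ?X = ?c * ?Y =>
      transitivity (/ c * (c * X)); [field | rewrite E; field];
      split; apply Cpow_nz; auto end.
Qed.

(** * Collapsing the weighted triple sum *)

Lemma cor48_partial_Csum (q a : C) N : cor48_partial q a N
  = Csum (fun i => Csum (fun j => Csum (fun k => cor48_term q a i j k) (S N)) (S N)) (S N).
Proof.
  unfold cor48_partial. rewrite csum_Csum. apply Csum_ext. intros i _.
  rewrite csum_Csum. apply Csum_ext. intros j _. apply csum_Csum.
Qed.

Definition weighted_partial (q a : C) (N : nat) : C :=
  Csum (fun i => Csum (fun j => Csum (fun k =>
    cor48_term q a i j k * qfalling q (i + j) N * qfalling q (i + k) N) (S N)) (S N)) (S N).

Definition double_term (q a : C) (N J K : nat) : C :=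
  q ^ (J * J + K * K - J * K) * (a ^ J / a ^ K) * qbinom q N J * qbinom q N K.

Lemma cor48_term_qfalling (q a : C) N i j k : (Cmod q < 1)%R -> a <> 0 ->
  cor48_term q a i j k * qfalling q (i + j) N * qfalling q (i + k) N
  = double_term q a N (i + j) (i + k)
    * (qbinom q (i + j) i * qfalling q i (i + k) * q ^ (j * k)).
Proof.
  intros Hq Ha. unfold double_term, cor48_term.
  rewrite <- (qbinom_qfalling q N (i + j)), <- (qbinom_qfalling q N (i + k)) by auto.
  rewrite (qbinom_formula q (i + j) i), <- (qfalling_qpoch q i (i + k)) by (auto; lia).
  replace (i + j - i)%nat with j by lia. replace (i + k - i)%nat with k by lia.
  replace (i * i + j * j + k * k + i * (j + k))%nat
    with ((i + j) * (i + j) + (i + k) * (i + k) - (i + j) * (i + k) + j * k)%nat by nia.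
  pose proof (qpoch_neq_0 q i Hq). pose proof (qpoch_neq_0 q j Hq).
  pose proof (qpoch_neq_0 q k Hq). pose proof (qpoch_neq_0 q (i + j) Hq).
  rewrite !Cpow_add_r. field. repeat split; auto using Cpow_nz.
Qed.

(* Summing out [i] with [sum_qbinom_qfalling] after the substitution [J = i + j], [K = i + k]. *)
Lemma weighted_partial_double (q a : C) N : (Cmod q < 1)%R -> a <> 0 ->
  weighted_partial q a N
  = Csum (fun J => Csum (fun K => double_term q a N J K) (S N)) (S N).
Proof.
  intros Hq Ha.
  set (T := fun i J K => double_term q a N J K
                         * (qbinom q J i * qfalling q i K * q ^ ((J - i) * (K - i)))).
  assert (HJ : forall i J K, (S N <= J)%nat -> T i J K = 0).
  { intros i J K HJ. unfold T, double_term. rewrite (qbinom_gt q N J) by lia. ring. }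
  assert (HK : forall i J K, (S N <= K)%nat -> T i J K = 0).
  { intros i J K HK. unfold T, double_term. rewrite (qbinom_gt q N K) by lia. ring. }
  unfold weighted_partial.
  rewrite (Csum_ext _ (fun i => Csum (fun J => Csum (fun K => T i J K) (S N)) (S N))).
  2: { intros i _. rewrite <- (Csum_shift (fun J => Csum (fun K => T i J K) (S N)) i (S N)).
       - apply Csum_ext. intros j _. rewrite <- (Csum_shift (fun K => T i (i + j)%nat K) i (S N)).
         + apply Csum_ext. intros k _. unfold T. rewrite cor48_term_qfalling by auto.
           replace (i + j - i)%nat with j by lia. replace (i + k - i)%nat with k by lia.
           reflexivity.
         + intros x Hx. unfold T. rewrite (qfalling_gt q i x) by lia. ring.
         + intros x Hx. auto.
       - intros x Hx. apply Csum_eq_0. intros K _.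
         unfold T. rewrite (qbinom_gt q x i) by lia. ring.
       - intros x Hx. apply Csum_eq_0. auto. }
  rewrite Csum_swap. apply Csum_ext. intros J HJN.
  rewrite Csum_swap. apply Csum_ext. intros K _. unfold T. rewrite Csum_scal.
  replace (S N) with (S J + (N - J))%nat by lia.
  rewrite Csum_add, sum_qbinom_qfalling by auto.
  rewrite Csum_eq_0; [ring |]. intros x _. rewrite (qbinom_gt q J (S J + x)) by lia. ring.
Qed.

Lemma double_term_below (q a : C) N K n : a <> 0 ->
  double_term q a N (K + n) K
  = q ^ (n * n) * a ^ n * (q ^ (K * (K + n)) * qbinom q N K * qbinom q N (K + n)).
Proof.
  intros Ha. unfold double_term.
  replace ((K + n) * (K + n) + K * K - (K + n) * K)%nat with (n * n + K * (K + n))%nat by nia.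
  rewrite !Cpow_add_r. field. apply Cpow_nz; auto.
Qed.

Lemma double_term_above (q a : C) N J n : a <> 0 ->
  double_term q a N J (J + S n)
  = q ^ (S n * S n) / a ^ S n * (q ^ (J * (J + S n)) * qbinom q N J * qbinom q N (J + S n)).
Proof.
  intros Ha. unfold double_term.
  replace (J * J + (J + S n) * (J + S n) - J * (J + S n))%nat
    with (S n * S n + J * (J + S n))%nat by nia.
  rewrite !Cpow_add_r. field. split; apply Cpow_nz; auto.
Qed.

Lemma weighted_partial_jtp (q a : C) N : (Cmod q < 1)%R -> a <> 0 ->
  weighted_partial q a N = jtp_sum q q a N.
Proof.
  intros Hq Ha. rewrite weighted_partial_double by auto.
  rewrite Csum_diag_split.
  2: intros J K HN; unfold double_term; rewrite (qbinom_gt q N J) by lia; ring.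
  2: intros J K HN; unfold double_term; rewrite (qbinom_gt q N K) by lia; ring.
  unfold jtp_sum. f_equal.
  - apply Csum_ext. intros n Hn.
    rewrite <- qvandermonde_central, <- Csum_scal by (auto; lia).
    apply Csum_ext. intros K _. apply double_term_below; auto.
  - rewrite Csum_last_0.
    + apply Csum_ext. intros n Hn.
      rewrite <- qvandermonde_central, <- Csum_scal by (auto; lia).
      apply Csum_ext. intros J _. apply double_term_above; auto.
    + apply Csum_eq_0. intros J _. unfold double_term.
      rewrite (qbinom_gt q N (J + S N)) by lia. ring.
Qed.

(** * Limits of complex sequences and Tannery's theorem *)

Notation is_Clim_seq u l := (filterlim u eventually (locally (l : C))).

Lemma is_Clim_seq_Cmod (u : nat -> C) (l : C) :
  is_Clim_seq u l <-> forall eps, (0 < eps)%R ->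
    exists N0, forall N, (N0 <= N)%nat -> (Cmod (u N - l) < eps)%R.
Proof.
  rewrite (filterlim_locally_ball_norm (K := C_AbsRing) (U := C_NormedModule)). split.
  - intros H eps Heps. exact (H (mkposreal eps Heps)).
  - intros H eps. exact (H eps (cond_pos eps)).
Qed.

Lemma is_Clim_seq_eq (u : nat -> C) (l l' : C) : is_Clim_seq u l -> l = l' -> is_Clim_seq u l'.
Proof. intros H <-. exact H. Qed.

Lemma is_Clim_seq_const (c : C) : is_Clim_seq (fun _ => c) c.
Proof. apply filterlim_const. Qed.

Lemma is_Clim_seq_plus (u v : nat -> C) (l m : C) :
  is_Clim_seq u l -> is_Clim_seq v m -> is_Clim_seq (fun N => u N + v N) (l + m).
Proof.
  intros Hu Hv. exact (filterlim_comp_2 _ _ _ Hu Hv (@filterlim_plus _ C_NormedModule l m)).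
Qed.

Lemma is_Clim_seq_minus (u v : nat -> C) (l m : C) :
  is_Clim_seq u l -> is_Clim_seq v m -> is_Clim_seq (fun N => u N - v N) (l - m).
Proof.
  intros Hu Hv. apply is_Clim_seq_plus; auto.
  exact (filterlim_comp _ _ _ _ _ _ _ _ Hv (@filterlim_opp _ C_NormedModule m)).
Qed.

(* Coquelicot's [filterlim_mult] is stated for the uniform structure of [C_AbsRing], which
   is not convertible to [C_UniformSpace]; we argue directly with
   [uv - lm = (u - l)(v - m) + l (v - m) + m (u - l)]. *)
Lemma is_Clim_seq_mult (u v : nat -> C) (l m : C) :
  is_Clim_seq u l -> is_Clim_seq v m -> is_Clim_seq (fun N => u N * v N) (l * m).
Proof.
  rewrite !is_Clim_seq_Cmod. intros Hu Hv eps Heps.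
  set (L := (1 + Cmod l + Cmod m)%R).
  assert (HL : (1 <= L)%R) by (unfold L; pose proof (Cmod_ge_0 l); pose proof (Cmod_ge_0 m); lra).
  set (d := Rmin 1 (eps / (2 * L))).
  assert (Hd : (0 < d)%R) by (apply Rmin_pos; [lra | apply Rdiv_lt_0_compat; lra]).
  destruct (Hu d Hd) as [N1 H1]. destruct (Hv d Hd) as [N2 H2].
  exists (max N1 N2). intros N HN.
  specialize (H1 N ltac:(lia)). specialize (H2 N ltac:(lia)).
  replace (u N * v N - l * m) with ((u N - l) * (v N - m) + l * (v N - m) + m * (u N - l))
    by ring.
  assert (Hd1 : (d <= 1)%R) by apply Rmin_l.
  assert (Hd2 : (d * L <= eps / 2)%R).
  { apply Rle_trans with (eps / (2 * L) * L)%R.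
    - apply Rmult_le_compat_r; [lra | apply Rmin_r].
    - right. field. lra. }
  pose proof (Cmod_triangle ((u N - l) * (v N - m) + l * (v N - m)) (m * (u N - l))).
  pose proof (Cmod_triangle ((u N - l) * (v N - m)) (l * (v N - m))).
  rewrite !Cmod_mult in *.
  pose proof (Cmod_ge_0 (u N - l)). pose proof (Cmod_ge_0 (v N - m)).
  pose proof (Cmod_ge_0 l). pose proof (Cmod_ge_0 m).
  unfold L in Hd2. nra.
Qed.

Lemma is_Clim_seq_inv (u : nat -> C) (l : C) :
  l <> 0 -> is_Clim_seq u l -> is_Clim_seq (fun N => / u N) (/ l).
Proof.
  rewrite !is_Clim_seq_Cmod. intros Hl Hu eps Heps.
  assert (Hm : (0 < Cmod l)%R) by (apply Cmod_gt_0; auto).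
  set (e := (eps * (Cmod l * Cmod l) / 2)%R).
  assert (He : (0 < e)%R)
    by (unfold e; apply Rdiv_lt_0_compat; [apply Rmult_lt_0_compat; nra | lra]).
  destruct (Hu (Cmod l / 2) ltac:(lra))%R as [N1 H1]. destruct (Hu e He) as [N2 H2].
  exists (max N1 N2). intros N HN.
  specialize (H1 N ltac:(lia)). specialize (H2 N ltac:(lia)).
  assert (Hf : (Cmod l / 2 <= Cmod (u N))%R).
  { pose proof (Cmod_triangle (l - u N) (u N)) as T.
    replace (l - u N + u N) with l in T by ring.
    replace (l - u N) with (- (u N - l)) in T by ring. rewrite Cmod_opp in T. lra. }
  assert (Hu0 : u N <> 0) by (intros E; rewrite E, Cmod_0 in Hf; lra).
  replace (/ u N - / l) with (- (u N - l) / (u N * l)) by (field; auto).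
  rewrite Cmod_div, Cmod_opp, Cmod_mult by (apply Cmult_neq_0; auto).
  apply Rle_lt_trans with (Cmod (u N - l) / (Cmod l / 2 * Cmod l))%R.
  - unfold Rdiv. apply Rmult_le_compat_l; [apply Cmod_ge_0 |].
    apply Rinv_le_contravar; [nra | apply Rmult_le_compat_r; lra].
  - apply Rlt_le_trans with (e / (Cmod l / 2 * Cmod l))%R.
    + unfold Rdiv. apply Rmult_lt_compat_r; [apply Rinv_0_lt_compat; nra | lra].
    + unfold e. right. field. lra.
Qed.

Lemma filterlim_nat_sub (g : nat -> nat) k :
  (forall N, (N - k <= g N)%nat) -> filterlim g eventually eventually.
Proof. intros Hg P [M HM]. exists (M + k)%nat. intros N HN. apply HM. specialize (Hg N). lia. Qed.

Lemma is_Clim_seq_Cpow (q : C) : (Cmod q < 1)%R -> is_Clim_seq (fun N => q ^ N) 0.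
Proof.
  intros Hq. apply is_Clim_seq_Cmod. intros eps Heps. pose proof (Cmod_ge_0 q).
  destruct (pow_lt_1_zero (Cmod q) ltac:(rewrite Rabs_right; lra) eps Heps) as [N0 HN].
  exists N0. intros N HN'. replace (q ^ N - 0) with (q ^ N) by ring. rewrite Cmod_pow.
  specialize (HN N HN'). rewrite Rabs_right in HN; auto. apply Rle_ge, pow_le; auto.
Qed.

Lemma is_Clim_seq_Csum (u : nat -> nat -> C) (v : nat -> C) M :
  (forall n, is_Clim_seq (fun N => u N n) (v n)) ->
  is_Clim_seq (fun N => Csum (u N) M) (Csum v M).
Proof.
  intros H. induction M as [|M IH]; [apply is_Clim_seq_const |].
  apply is_Clim_seq_plus; auto.
Qed.

Lemma tannery (u : nat -> nat -> C) (D r : R) : (0 <= r < 1)%R ->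
  (forall N n, Cmod (u N n) <= D * r ^ n)%R -> (forall n, is_Clim_seq (fun N => u N n) 0) ->
  is_Clim_seq (fun N => Csum (u N) (S N)) 0.
Proof.
  intros Hr Hb Hc. apply is_Clim_seq_Cmod. intros eps Heps.
  assert (HD : (0 <= D)%R).
  { specialize (Hb O O). pose proof (Cmod_ge_0 (u O O)). simpl in Hb. lra. }
  assert (Hx : (0 < eps * (1 - r) / (2 * (D + 1)))%R).
  { apply Rdiv_lt_0_compat; [apply Rmult_lt_0_compat |]; lra. }
  destruct (pow_lt_1_zero r ltac:(rewrite Rabs_right; lra) _ Hx) as [M HM].
  specialize (HM M (le_n _)). rewrite Rabs_right in HM by (apply Rle_ge, pow_le; lra).
  assert (Htail : (D * r ^ M / (1 - r) < eps / 2)%R).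
  { assert (H1 : ((D + 1) * r ^ M < eps * (1 - r) / 2)%R).
    { replace (eps * (1 - r) / 2)%R with ((D + 1) * (eps * (1 - r) / (2 * (D + 1))))%R
        by (field; lra).
      apply Rmult_lt_compat_l; lra. }
    pose proof (pow_le r M ltac:(lra)).
    apply Rmult_lt_reg_r with (1 - r)%R; [lra |].
    replace (D * r ^ M / (1 - r) * (1 - r))%R with (D * r ^ M)%R by (field; lra). nra. }
  pose proof (is_Clim_seq_Csum u (fun _ => 0) M Hc) as Hfin.
  rewrite is_Clim_seq_Cmod in Hfin. destruct (Hfin (eps / 2)%R ltac:(lra)) as [N1 HN1].
  exists (max M N1). intros N HN.
  specialize (HN1 N ltac:(lia)). rewrite (Csum_eq_0 (fun _ => 0) M) in HN1 by auto.
  replace (Csum (u N) M - 0) with (Csum (u N) M) in HN1 by ring.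
  replace (Csum (u N) (S N) - 0) with (Csum (u N) (S N)) by ring.
  replace (S N) with (M + (S N - M))%nat by lia. rewrite Csum_add.
  assert (Cmod (Csum (fun k => u N (M + k)%nat) (S N - M)) <= D * r ^ M / (1 - r))%R.
  { apply Cmod_Csum_geom; auto. intros k. rewrite Rmult_assoc, <- pow_add. apply Hb. }
  pose proof (Cmod_triangle (Csum (u N) M) (Csum (fun k => u N (M + k)%nat) (S N - M))).
  lra.
Qed.

Lemma tannery2 (u : nat -> nat -> nat -> C) (D r : R) : (0 <= r < 1)%R ->
  (forall N j k, Cmod (u N j k) <= D * r ^ j * r ^ k)%R ->
  (forall j k, is_Clim_seq (fun N => u N j k) 0) ->
  is_Clim_seq (fun N => Csum (fun j => Csum (u N j) (S N)) (S N)) 0.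
Proof.
  intros Hr Hb Hc. apply (tannery _ (D / (1 - r)) r); auto.
  - intros N j. replace (D / (1 - r) * r ^ j)%R with (D * r ^ j / (1 - r))%R by (field; lra).
    apply Cmod_Csum_geom; auto.
  - intros j. apply (tannery (fun N => u N j) (D * r ^ j) r); auto.
Qed.

Lemma tannery3 (u : nat -> nat -> nat -> nat -> C) (D r : R) : (0 <= r < 1)%R ->
  (forall N i j k, Cmod (u N i j k) <= D * r ^ i * r ^ j * r ^ k)%R ->
  (forall i j k, is_Clim_seq (fun N => u N i j k) 0) ->
  is_Clim_seq (fun N => Csum (fun i => Csum (fun j => Csum (u N i j) (S N)) (S N)) (S N)) 0.
Proof.
  intros Hr Hb Hc. apply (tannery _ (D / (1 - r) / (1 - r)) r); auto.
  - intros N i.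
    replace (D / (1 - r) / (1 - r) * r ^ i)%R with (D * r ^ i / (1 - r) / (1 - r))%R
      by (field; lra).
    apply Cmod_Csum_geom; auto. intros j.
    replace (D * r ^ i / (1 - r) * r ^ j)%R with (D * r ^ i * r ^ j / (1 - r))%R
      by (field; lra).
    apply Cmod_Csum_geom; auto.
  - intros i. apply (tannery2 (fun N => u N i) (D * r ^ i) r); auto.
Qed.

Lemma tannery_weighted (c : nat -> C) (v : nat -> nat -> C) (C0 B r : R) : (0 <= r < 1)%R ->
  (forall n, Cmod (c n) <= C0 * r ^ n)%R -> (forall N n, Cmod (v N n) <= B)%R ->
  (forall n, is_Clim_seq (fun N => v N n) 0) ->
  is_Clim_seq (fun N => Csum (fun n => c n * v N n) (S N)) 0.
Proof.
  intros Hr Hc Hv Hlim. apply (tannery _ (C0 * B) r); auto.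
  - intros N n. rewrite Cmod_mult.
    replace (C0 * B * r ^ n)%R with (C0 * r ^ n * B)%R by ring.
    apply Rmult_le_compat; auto using Cmod_ge_0.
  - intros n. apply (is_Clim_seq_eq _ (c n * 0)); [| ring].
    apply is_Clim_seq_mult; auto using is_Clim_seq_const.
Qed.

Lemma pow_le_pow_decr (x : R) m n : (0 <= x <= 1)%R -> (m <= n)%nat -> (x ^ n <= x ^ m)%R.
Proof.
  intros Hx Hmn. replace n with (m + (n - m))%nat by lia. rewrite pow_add.
  pose proof (pow_le x m ltac:(lra)). pose proof (pow_le x (n - m) ltac:(lra)).
  assert (x ^ (n - m) <= 1)%R by (rewrite <- (pow1 (n - m)); apply pow_incr; lra).
  nra.
Qed.

Lemma Cmod_1_minus_ge (z : C) : (1 - Cmod z <= Cmod (1 - z))%R.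
Proof.
  pose proof (Cmod_triangle (1 - z) z) as T.
  replace (1 - z + z) with (RtoC 1) in T by ring. rewrite Cmod_1 in T. lra.
Qed.

Lemma Cmod_1_minus_le (z : C) : (Cmod (1 - z) <= 1 + Cmod z)%R.
Proof. pose proof (Cmod_triangle 1 (- z)) as T. rewrite Cmod_opp, Cmod_1 in T. exact T. Qed.

Lemma exp_le_exp (x y : R) : (x <= y)%R -> (exp x <= exp y)%R.
Proof. intros [H | ->]; [left; apply exp_increasing; auto | lra]. Qed.

(* From [1 + y <= exp y] at [y = x / (1 - x)]. *)
Lemma exp_le_1_minus (x r : R) : (0 <= x <= r)%R -> (r < 1)%R ->
  (exp (- (x / (1 - r))) <= 1 - x)%R.
Proof.
  intros Hx Hr. set (y := (x / (1 - x))%R).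
  assert (Hy : (y <= x / (1 - r))%R).
  { unfold y, Rdiv. apply Rmult_le_compat_l; [lra |]. apply Rinv_le_contravar; lra. }
  apply Rle_trans with (exp (- y)); [apply exp_le_exp; lra |].
  rewrite exp_Ropp. pose proof (exp_ineq1_le y) as E.
  replace (1 + y)%R with (/ (1 - x))%R in E by (unfold y; field; lra).
  rewrite <- (Rinv_inv (1 - x)).
  apply Rinv_le_contravar; [apply Rinv_0_lt_compat; lra | exact E].
Qed.

(* [r (1 - r^m) / (1 - r) = r + r^2 + ... + r^m]. *)
Lemma Cmod_qpoch_le (p : C) m : (Cmod p < 1)%R ->
  (Cmod (qpoch p p m) <= exp (Cmod p * (1 - Cmod p ^ m) / (1 - Cmod p)))%R.
Proof.
  intros Hp. set (r := Cmod p). assert (Hr : (r < 1)%R) by auto.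
  induction m as [|m IH]; simpl qpoch.
  - rewrite Cmod_1. replace (r * (1 - r ^ 0) / (1 - r))%R with 0%R by (simpl; field; lra).
    rewrite exp_0. lra.
  - rewrite Cmod_mult.
    replace (r * (1 - r ^ S m) / (1 - r))%R
      with (r * (1 - r ^ m) / (1 - r) + r ^ S m)%R by (simpl; field; lra).
    rewrite exp_plus. apply Rmult_le_compat; try apply Cmod_ge_0; auto.
    eapply Rle_trans; [apply Cmod_1_minus_le |]. rewrite Cmod_mult, Cmod_pow.
    apply exp_ineq1_le.
Qed.

Lemma Cmod_qpoch_ge (p : C) m : (Cmod p < 1)%R ->
  (exp (- (Cmod p * (1 - Cmod p ^ m) / (1 - Cmod p) / (1 - Cmod p)))
   <= Cmod (qpoch p p m))%R.
Proof.
  intros Hp. set (r := Cmod p). assert (Hr : (0 <= r < 1)%R) by (split; [apply Cmod_ge_0 | auto]).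
  induction m as [|m IH]; simpl qpoch.
  - rewrite Cmod_1. replace (r * (1 - r ^ 0) / (1 - r) / (1 - r))%R with 0%R
      by (simpl; field; lra). rewrite Ropp_0, exp_0. lra.
  - rewrite Cmod_mult.
    replace (- (r * (1 - r ^ S m) / (1 - r) / (1 - r)))%R
      with (- (r * (1 - r ^ m) / (1 - r) / (1 - r)) + - (r ^ S m / (1 - r)))%R
      by (simpl; field; lra).
    rewrite exp_plus. apply Rmult_le_compat; try (left; apply exp_pos); [exact IH |].
    eapply Rle_trans; [| apply Cmod_1_minus_ge]. rewrite Cmod_mult, Cmod_pow.
    change (Cmod p * Cmod p ^ m)%R with (r ^ S m)%R.
    apply exp_le_1_minus; [| lra].
    pose proof (pow_le_pow_decr r 1 (S m) ltac:(lra) ltac:(lia)).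
    pose proof (pow_le r (S m) ltac:(lra)). simpl in *. lra.
Qed.

Lemma qpoch_bounds (p : C) : (Cmod p < 1)%R ->
  exists d U, (0 < d)%R /\ forall m, (d <= Cmod (qpoch p p m) <= U)%R.
Proof.
  intros Hp. set (r := Cmod p). assert (Hr : (0 <= r < 1)%R) by (split; [apply Cmod_ge_0 | auto]).
  exists (exp (- (r / (1 - r) / (1 - r)))), (exp (r / (1 - r))). split; [apply exp_pos |].
  intros m. pose proof (Rinv_0_lt_compat (1 - r) ltac:(lra)).
  assert (Hrm : (0 <= r * (1 - r ^ m) <= r)%R).
  { pose proof (pow_le r m ltac:(lra)). pose proof (pow_le_pow_decr r 0 m ltac:(lra) ltac:(lia)).
    simpl in *. nra. }
  split.
  - eapply Rle_trans; [| apply Cmod_qpoch_ge; auto]. apply exp_le_exp. fold r. unfold Rdiv.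
    apply Ropp_le_contravar. apply Rmult_le_compat_r; [lra |].
    apply Rmult_le_compat_r; lra.
  - eapply Rle_trans; [apply Cmod_qpoch_le; auto |]. apply exp_le_exp. fold r. unfold Rdiv.
    apply Rmult_le_compat_r; lra.
Qed.

Lemma qbinom_bounded (p : C) : (Cmod p < 1)%R ->
  exists B, (0 <= B)%R /\ forall m j, (Cmod (qbinom p m j) <= B)%R.
Proof.
  intros Hp. destruct (qpoch_bounds p Hp) as (d & U & Hd & HdU).
  assert (HU : (0 <= U)%R) by (destruct (HdU O); lra).
  assert (HB : (0 <= U / (d * d))%R)
    by (apply Rmult_le_pos; [| left; apply Rinv_0_lt_compat]; nra).
  exists (U / (d * d))%R. split; auto. intros m j.
  destruct (Nat.le_gt_cases j m).
  - rewrite qbinom_formula, Cmod_div, Cmod_mult by (auto using Cmult_neq_0, qpoch_neq_0).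
    destruct (HdU m), (HdU j), (HdU (m - j)%nat). unfold Rdiv.
    apply Rmult_le_compat; auto using Cmod_ge_0.
    + left. apply Rinv_0_lt_compat. nra.
    + apply Rinv_le_contravar; [nra | apply Rmult_le_compat; lra].
  - rewrite qbinom_gt, Cmod_0 by auto. exact HB.
Qed.

Lemma qfalling_bounded (p : C) : (Cmod p < 1)%R ->
  exists B, (0 <= B)%R /\ forall i K, (Cmod (qfalling p i K) <= B)%R.
Proof.
  intros Hp. destruct (qbinom_bounded p Hp) as (B & HB & HBb).
  destruct (qpoch_bounds p Hp) as (d & U & Hd & HdU).
  assert (HU : (0 <= U)%R) by (destruct (HdU O); lra).
  exists (B * U)%R. split; [nra |]. intros i K.
  rewrite <- qbinom_qfalling, Cmod_mult by auto.
  apply Rmult_le_compat; auto using Cmod_ge_0. apply HdU.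
Qed.

(* [r^(n^2) A^n = r^n (r^(n-1) A)^n], and [r^(n-1) A <= 1] for large [n]. *)
Lemma gauss_geom_bound (r A : R) : (0 <= r < 1)%R -> (0 <= A)%R ->
  exists C, forall n, (r ^ (n * n) * A ^ n <= C * r ^ n)%R.
Proof.
  intros Hr HA.
  destruct (pow_lt_1_zero r ltac:(rewrite Rabs_right; lra) (/ (A + 1)))%R as [n0 Hn0].
  { apply Rinv_0_lt_compat. lra. }
  set (A1 := Rmax 1 A).
  assert (HA1 : (1 <= A1 /\ A <= A1)%R) by (split; [apply Rmax_l | apply Rmax_r]).
  exists (A1 ^ S n0)%R. intros n.
  assert (Hsplit : (r ^ (n * n) * A ^ n = r ^ n * (r ^ (n - 1) * A) ^ n)%R).
  { rewrite Rpow_mult_distr, <- pow_mult, <- Rmult_assoc, <- pow_add.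
    destruct n; [reflexivity | f_equal; f_equal; nia]. }
  rewrite Hsplit, Rmult_comm. apply Rmult_le_compat_r; [apply pow_le; lra |].
  assert (Hb : (0 <= r ^ (n - 1) * A)%R) by (apply Rmult_le_pos; [apply pow_le |]; lra).
  destruct (Nat.le_gt_cases n (S n0)) as [Hn|Hn].
  - apply Rle_trans with (A1 ^ n)%R.
    + apply pow_incr. split; auto.
      pose proof (pow_le_pow_decr r 0 (n - 1) ltac:(lra) ltac:(lia)). simpl in *. nra.
    + apply Rle_pow; lra || lia.
  - apply Rle_trans with 1%R; [| apply pow_R1_Rle; lra].
    rewrite <- (pow1 n). apply pow_incr. split; auto.
    specialize (Hn0 n0 (le_n _)).
    rewrite Rabs_right in Hn0 by (apply Rle_ge, pow_le; lra).
    pose proof (pow_le_pow_decr r n0 (n - 1) ltac:(lra) ltac:(lia)).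
    assert (r ^ n0 * (A + 1) < 1)%R.
    { apply Rmult_lt_reg_r with (/ (A + 1))%R; [apply Rinv_0_lt_compat; lra |].
      rewrite Rmult_assoc, Rinv_r, Rmult_1_r, Rmult_1_l by lra. exact Hn0. }
    pose proof (pow_le r (n - 1) ltac:(lra)). nra.
Qed.

Lemma Cmod_cor48_term (q a : C) i j k : (Cmod q < 1)%R -> a <> 0 ->
  Cmod (cor48_term q a i j k)
  = (Cmod q ^ (i * i + i * (j + k)) / Cmod (qpoch q q i)
     * (Cmod q ^ (j * j) * Cmod a ^ j / Cmod (qpoch q q j))
     * (Cmod q ^ (k * k) * (/ Cmod a) ^ k / Cmod (qpoch q q k)))%R.
Proof.
  intros Hq Ha. unfold cor48_term.
  pose proof (qpoch_neq_0 q i Hq). pose proof (qpoch_neq_0 q j Hq).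
  pose proof (qpoch_neq_0 q k Hq).
  rewrite Cmod_mult, !Cmod_div, !Cmod_mult, !Cmod_pow, pow_inv
    by (auto using Cpow_nz, Cmult_neq_0).
  replace (i * i + j * j + k * k + i * (j + k))%nat
    with (i * i + i * (j + k) + j * j + k * k)%nat by lia.
  rewrite !pow_add. field. rewrite <- Cmod_pow.
  repeat split; apply Rgt_not_eq, Cmod_gt_0; auto using Cpow_nz.
Qed.

Lemma cor48_term_bound (q a : C) : (Cmod q < 1)%R -> a <> 0 ->
  exists K0, forall i j k,
    (Cmod (cor48_term q a i j k) <= K0 * Cmod q ^ i * Cmod q ^ j * Cmod q ^ k)%R.
Proof.
  intros Hq Ha. set (r := Cmod q).
  assert (Hr : (0 <= r < 1)%R) by (split; [apply Cmod_ge_0 | auto]).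
  assert (Hma : (0 < Cmod a)%R) by (apply Cmod_gt_0; auto).
  assert (Hia : (0 < / Cmod a)%R) by (apply Rinv_0_lt_compat; lra).
  destruct (qpoch_bounds q Hq) as (d & U & Hd & HdU).
  destruct (gauss_geom_bound r (Cmod a) Hr ltac:(lra)) as [C1 HC1].
  destruct (gauss_geom_bound r (/ Cmod a) Hr ltac:(lra)) as [C2 HC2].
  assert (Hfactor : forall (x c : R) n m, (0 <= x <= c * r ^ n)%R ->
                      (0 <= x / Cmod (qpoch q q m) <= c / d * r ^ n)%R).
  { intros x c n m Hx. destruct (HdU m) as [Hdm _]. unfold Rdiv. split.
    - apply Rmult_le_pos; [lra | left; apply Rinv_0_lt_compat; lra].
    - replace (c * / d * r ^ n)%R with (c * r ^ n * / d)%R by ring.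
      apply Rmult_le_compat; try lra.
      + left. apply Rinv_0_lt_compat. lra.
      + apply Rinv_le_contravar; lra. }
  exists (1 / d * (C1 / d) * (C2 / d))%R. intros i j k.
  rewrite Cmod_cor48_term by auto. fold r.
  replace (1 / d * (C1 / d) * (C2 / d) * r ^ i * r ^ j * r ^ k)%R
    with (1 / d * r ^ i * (C1 / d * r ^ j) * (C2 / d * r ^ k))%R by ring.
  destruct (Hfactor (r ^ (i * i + i * (j + k))) 1 i i)%R as [H1 H1'].
  { split; [apply pow_le; lra |]. rewrite Rmult_1_l. apply pow_le_pow_decr; [lra | nia]. }
  destruct (Hfactor (r ^ (j * j) * Cmod a ^ j) C1 j j)%R as [H2 H2'].
  { split; [apply Rmult_le_pos; apply pow_le; lra | apply HC1]. }
  destruct (Hfactor (r ^ (k * k) * (/ Cmod a) ^ k) C2 k k)%R as [H3 H3'].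
  { split; [apply Rmult_le_pos; apply pow_le; lra | apply HC2]. }
  apply Rmult_le_compat; [nra | lra | apply Rmult_le_compat; lra | lra].
Qed.

Lemma qpoch_lim_neq_0 (p P : C) : (Cmod p < 1)%R -> is_qpoch_inf p p P -> P <> 0.
Proof.
  intros Hp HP ->. destruct (qpoch_bounds p Hp) as (d & U & Hd & HdU).
  unfold is_qpoch_inf in HP. rewrite is_Clim_seq_Cmod in HP. destruct (HP d Hd) as [N0 HN].
  specialize (HN N0 (le_n _)). specialize (HdU N0).
  replace (qpoch p p N0 - 0) with (qpoch p p N0) in HN by ring. lra.
Qed.

Lemma qfalling_lim_1 (q : C) J : (Cmod q < 1)%R -> is_Clim_seq (fun N => qfalling q J N) 1.
Proof.
  intros Hq. induction J as [|J IH]; [apply is_Clim_seq_const |]. simpl qfalling.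
  apply (is_Clim_seq_eq _ ((1 - 0) * 1)); [apply is_Clim_seq_mult | ring].
  - apply is_Clim_seq_minus; [apply is_Clim_seq_const | apply is_Clim_seq_Cpow; auto].
  - exact (filterlim_comp _ _ _ _ _ _ _ _
             (filterlim_nat_sub (fun N => N - 1)%nat 1 (fun N => le_n _)) IH).
Qed.

Lemma qbinom_central_lim (p P : C) n : (Cmod p < 1)%R -> is_qpoch_inf p p P ->
  is_Clim_seq (fun N => P * qbinom p (2 * N) (N + n)) 1.
Proof.
  intros Hp HP. pose proof (qpoch_lim_neq_0 p P Hp HP) as HP0.
  assert (Hsub : forall g k, (forall N, (N - k <= g N)%nat) ->
                   is_Clim_seq (fun N => qpoch p p (g N)) P).
  { intros g k Hg. exact (filterlim_comp _ _ _ _ _ _ _ _ (filterlim_nat_sub g k Hg) HP). }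
  apply (filterlim_ext_loc (fun N => P * (qpoch p p (2 * N)
                                         / (qpoch p p (N + n) * qpoch p p (2 * N - (N + n)))))).
  { exists n. intros N HN. rewrite qbinom_formula by (auto; lia). reflexivity. }
  apply (is_Clim_seq_eq _ (P * (P / (P * P)))); [| field; auto].
  apply is_Clim_seq_mult; [apply is_Clim_seq_const |].
  apply is_Clim_seq_mult; [apply (Hsub _ 0%nat); intros; lia |].
  apply is_Clim_seq_inv; [apply Cmult_neq_0; auto |].
  apply is_Clim_seq_mult; apply (Hsub _ n); intros; lia.
Qed.

Lemma partial_sub_weighted_lim (q a : C) : (Cmod q < 1)%R -> a <> 0 ->
  is_Clim_seq (fun N => cor48_partial q a N - weighted_partial q a N) 0.
Proof.
  intros Hq Ha. set (r := Cmod q).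
  apply (filterlim_ext (fun N => Csum (fun i => Csum (fun j => Csum (fun k =>
    cor48_term q a i j k * (1 - qfalling q (i + j) N * qfalling q (i + k) N))
    (S N)) (S N)) (S N))).
  { intros N. rewrite cor48_partial_Csum. unfold weighted_partial.
    rewrite <- Csum_minus. apply Csum_ext. intros i _.
    rewrite <- Csum_minus. apply Csum_ext. intros j _.
    rewrite <- Csum_minus. apply Csum_ext. intros k _. ring. }
  destruct (cor48_term_bound q a Hq Ha) as [K0 HK0].
  destruct (qfalling_bounded q Hq) as (B & HB & HBb).
  apply (tannery3 _ (K0 * (1 + B * B)) r); [split; [apply Cmod_ge_0 | auto] | |].
  - intros N i j k. rewrite Cmod_mult.
    assert (Hf : (Cmod (1 - qfalling q (i + j) N * qfalling q (i + k) N) <= 1 + B * B)%R).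
    { eapply Rle_trans; [apply Cmod_1_minus_le |]. rewrite Cmod_mult.
      pose proof (HBb (i + j)%nat N). pose proof (HBb (i + k)%nat N).
      pose proof (Cmod_ge_0 (qfalling q (i + j) N)). nra. }
    specialize (HK0 i j k). fold r in HK0.
    replace (K0 * (1 + B * B) * r ^ i * r ^ j * r ^ k)%R
      with (K0 * r ^ i * r ^ j * r ^ k * (1 + B * B))%R by ring.
    apply Rmult_le_compat; auto using Cmod_ge_0.
  - intros i j k. apply (is_Clim_seq_eq _ (cor48_term q a i j k * (1 - 1 * 1))); [| ring].
    apply is_Clim_seq_mult; [apply is_Clim_seq_const |].
    apply is_Clim_seq_minus; [apply is_Clim_seq_const |].
    apply is_Clim_seq_mult; apply qfalling_lim_1; auto.
Qed.

Lemma jtp_sum_lincomb (p p' q a P P' : C) N :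
  P * jtp_sum p q a N - P' * jtp_sum p' q a N
  = Csum (fun n => q ^ (n * n) * a ^ n
          * (P * qbinom p (2 * N) (N + n) - P' * qbinom p' (2 * N) (N + n))) (S N)
  + Csum (fun n => q ^ (S n * S n) / a ^ S n
          * (P * qbinom p (2 * N) (N + S n) - P' * qbinom p' (2 * N) (N + S n))) (S N).
Proof.
  unfold jtp_sum. rewrite !Csum_lincomb.
  rewrite (Csum_last_0 (fun n => q ^ (S n * S n) / a ^ S n * qbinom p (2 * N) (N + S n)) N),
    (Csum_last_0 (fun n => q ^ (S n * S n) / a ^ S n * qbinom p' (2 * N) (N + S n)) N)
    by (rewrite qbinom_gt by lia; ring).
  ring.
Qed.

Lemma jtp_sum_lim (p p' q a P P' : C) :
  (Cmod p < 1)%R -> (Cmod p' < 1)%R -> (Cmod q < 1)%R -> a <> 0 ->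
  is_qpoch_inf p p P -> is_qpoch_inf p' p' P' ->
  is_Clim_seq (fun N => P * jtp_sum p q a N - P' * jtp_sum p' q a N) 0.
Proof.
  intros Hp Hp' Hq Ha HP HP'. set (r := Cmod q).
  assert (Hr : (0 <= r < 1)%R) by (split; [apply Cmod_ge_0 | auto]).
  assert (Hma : (0 < Cmod a)%R) by (apply Cmod_gt_0; auto).
  set (v := fun N m => P * qbinom p (2 * N) m - P' * qbinom p' (2 * N) m).
  apply (filterlim_ext (fun N =>
      Csum (fun n => q ^ (n * n) * a ^ n * v N (N + n)%nat) (S N)
    + Csum (fun n => q ^ (S n * S n) / a ^ S n * v N (N + S n)%nat) (S N))).
  { intros N. symmetry. apply jtp_sum_lincomb. }
  destruct (qbinom_bounded p Hp) as (B & HB & HBb).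
  destruct (qbinom_bounded p' Hp') as (B' & HB' & HBb').
  set (Bv := (Cmod P * B + Cmod P' * B')%R).
  assert (Hv : forall N m, (Cmod (v N m) <= Bv)%R).
  { intros N m. unfold v, Bv. eapply Rle_trans; [apply Cmod_triangle |].
    rewrite Cmod_opp, !Cmod_mult.
    pose proof (HBb (2 * N)%nat m). pose proof (HBb' (2 * N)%nat m).
    pose proof (Cmod_ge_0 P). pose proof (Cmod_ge_0 P'). nra. }
  assert (Hvlim : forall n, is_Clim_seq (fun N => v N (N + n)%nat) 0).
  { intros n. unfold v. apply (is_Clim_seq_eq _ (1 - 1)); [| ring].
    apply is_Clim_seq_minus; apply qbinom_central_lim; auto. }
  assert (Hia : (0 < / Cmod a)%R) by (apply Rinv_0_lt_compat; lra).
  destruct (gauss_geom_bound r (Cmod a) Hr ltac:(lra)) as [C1 HC1].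
  destruct (gauss_geom_bound r (/ Cmod a) Hr ltac:(lra)) as [C2 HC2].
  apply (is_Clim_seq_eq _ (0 + 0)); [apply is_Clim_seq_plus | ring].
  - apply (tannery_weighted _ (fun N n => v N (N + n)%nat) C1 Bv r Hr); auto.
    intros n. rewrite Cmod_mult, !Cmod_pow. apply HC1.
  - apply (tannery_weighted _ (fun N n => v N (N + S n)%nat) C2 Bv r Hr); auto.
    intros n. rewrite Cmod_div, !Cmod_pow by (apply Cpow_nz; auto). fold r.
    pose proof (HC2 O) as HC2pos. simpl in HC2pos.
    specialize (HC2 (S n)). rewrite pow_inv in HC2.
    pose proof (pow_le_pow_decr r n (S n) ltac:(lra) ltac:(lia)).
    unfold Rdiv. eapply Rle_trans; [exact HC2 |]. apply Rmult_le_compat_l; lra.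
Qed.

Theorem corollary4p8 (q a : C) (hq : (Cmod q < 1)%R) (ha : a <> 0)
  (P1 P2 P3 P4 : C) :
  is_qpoch_inf (- a * q) (q ^ 2) P1 ->
  is_qpoch_inf (- q / a) (q ^ 2) P2 ->
  is_qpoch_inf (q ^ 2) (q ^ 2) P3 ->
  is_qpoch_inf q q P4 ->
  filterlim (cor48_partial q a) eventually (locally (P1 * P2 * P3 / P4)).
Proof.
  intros H1 H2 H3 H4.
  pose proof (Cmod_sqr_lt_1 q hq) as hq2.
  pose proof (qpoch_lim_neq_0 q P4 hq H4) as HP4.
  apply (filterlim_ext (fun N => (cor48_partial q a N - weighted_partial q a N)
     + (P4 * jtp_sum q q a N - P3 * jtp_sum (q ^ 2) q a N) / P4
     + P3 / P4 * (qpoch (- a * q) (q ^ 2) N * qpoch (- q / a) (q ^ 2) N))).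
  { intros N. rewrite weighted_partial_jtp, jtp_finite by auto. field. auto. }
  apply (is_Clim_seq_eq _ (0 + 0 / P4 + P3 / P4 * (P1 * P2))); [| field; auto].
  apply is_Clim_seq_plus; [apply is_Clim_seq_plus |].
  - apply partial_sub_weighted_lim; auto.
  - apply is_Clim_seq_mult; [apply jtp_sum_lim; auto | apply is_Clim_seq_const].
  - apply is_Clim_seq_mult; [apply is_Clim_seq_const | apply is_Clim_seq_mult; auto].
Qed.
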